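(* For all $r,s\ge1$, as an identity of polynomials in $q$, $$\sum_C(q-1)^{r+s-l(C)-1}=\sum_{m=0}^{\min(r-1,s-1)}\binom{r-1}{m}\binom{s-1}{m}q^{r+s-m-1},$$ where the sum runs over all cells $C$ for $(r,s)$, including the empty cell.
   Context: A cell (for given $r,s$) is a finite (possibly empty) sequence of distinct pairs $(i_1,j_1),\dots,(i_l,j_l)$ with $1\le i_k\le r$, $1\le j_k\le s$, $i_1\le\cdots\le i_l$ and $j_1\le\cdots\le j_l$; $l(C)=l$ is its length. *)

From HB Require Import structures.
From mathcomp Require Import all_boot all_order all_algebra.
Set Implicit Arguments. Unset Strict Implicit. Unset Printing Implicit Defensive.
Import GRing.Theory.

Definition is_cell (r s : nat) (C : seq (nat * nat)) : bool :=
  [&& uniq C,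
      all (fun p => (1 <= p.1 <= r) && (1 <= p.2 <= s)) C,
      sorted (fun a b : nat * nat => a.1 <= b.1) C &
      sorted (fun a b : nat * nat => a.2 <= b.2) C].

Fixpoint words (xs : seq (nat * nat)) (l : nat) : seq (seq (nat * nat)) :=
  if l is l'.+1 then [seq x :: w | x <- xs, w <- words xs l'] else [:: [::]].

Definition all_pairs (r s : nat) : seq (nat * nat) :=
  [seq (i, j) | i <- iota 1 r, j <- iota 1 s].

(* The list of all cells for (r,s) (each exactly once): a cell consists of
   distinct pairs from [1,r]x[1,s], so its length is at most r*s. *)
Definition cells (r s : nat) : seq (seq (nat * nat)) :=
  [seq C <- flatten [seq words (all_pairs r s) l | l <- iota 0 (r * s).+1]
     | is_cell r s C].

From HB Require Import structures.
From mathcomp Require Import all_boot all_order all_algebra.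
From mathcomp Require Import zify ring.
Import GRing.Theory.
Set Implicit Arguments. Unset Strict Implicit. Unset Printing Implicit Defensive.

(* A cell is a chain for the product order on [1,r] x [1,s]; as i + j
   strictly increases along it, a cell has at most r + s - 1 entries.  Call
   T(r,s) the left-hand side.  A cell for (r+1,s+1) avoiding the corner
   (r+1,s+1) stays in the first r rows or in the first s columns, and a cell
   containing the corner is a cell avoiding it followed by the corner.  Pairing
   these two kinds and using inclusion-exclusion gives
     T(r+1,s+1) = q T(r,s+1) + q T(r+1,s) - q (q-1) T(r,s),
   which Pascal's rule also yields for the right-hand side; both sides agree
   when r = 1 or s = 1. *)

Lemma sorted_rcons (T : Type) (e : rel T) : transitive e ->
  forall c y, sorted e (rcons c y) = sorted e c && all (e^~ y) c.
Proof.
move=> e_tr c y.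
by rewrite !sorted_pairwise // -cats1 pairwise_cat allrel1r /= andbT andbC.
Qed.

Definition le_pair : rel (nat * nat) := [rel a b | (a.1 <= b.1) && (a.2 <= b.2)].

Lemma le_pair_refl : reflexive le_pair.
Proof. by move=> x; rewrite /le_pair /= !leqnn. Qed.

Lemma le_pair_trans : transitive le_pair.
Proof. by move=> y x z /andP[? ?] /andP[? ?]; apply/andP; split; lia. Qed.

Lemma le_fst_trans : transitive (fun a b : nat * nat => a.1 <= b.1).
Proof. by move=> ? ? ? /leq_trans le1 /le1. Qed.

Lemma le_snd_trans : transitive (fun a b : nat * nat => a.2 <= b.2).
Proof. by move=> ? ? ? /leq_trans le1 /le1. Qed.

Section CellProperties.

Variables (r s : nat) (C : seq (nat * nat)).
Hypothesis cellC : is_cell r s C.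

Lemma cell_bounds p : p \in C -> (1 <= p.1 <= r) && (1 <= p.2 <= s).
Proof. by case/and4P: cellC => _ /allP bdC _ _ /bdC. Qed.

Lemma cell_sorted : sorted le_pair C.
Proof. by case/and4P: cellC => _ _ s1 s2; rewrite /le_pair sorted_relI s1 s2. Qed.

Lemma cell_le_pair_total x y : x \in C -> y \in C -> le_pair x y || le_pair y x.
Proof.
move=> xC yC; have leC := sorted_leq_nth le_pair_trans le_pair_refl x cell_sorted.
have ix : index x C < size C by rewrite index_mem.
have iy : index y C < size C by rewrite index_mem.
case: (leqP (index x C) (index y C)) => [le_xy|/ltnW le_yx].
  by have := leC _ _ ix iy le_xy; rewrite !nth_index // => ->.
by have := leC _ _ iy ix le_yx; rewrite !nth_index // => ->; rewrite orbT.
Qed.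

Lemma size_cell : size C <= r + s - 1.
Proof.
pose h (p : nat * nat) := p.1 + p.2.
have inj_h : {in C &, injective h}.
  move=> [a b] [c d] abC cdC; rewrite /h /= => eq_h.
  by case/orP: (cell_le_pair_total abC cdC) => /andP[/= ? ?]; congr pair; lia.
rewrite -(size_map h) -(size_iota 2 (r + s - 1)) uniq_leq_size //.
  by rewrite map_inj_in_uniq //; case/and4P: cellC.
move=> k /mapP[[a b] abC ->]; rewrite mem_iota.
by have := cell_bounds abC; rewrite /h /=; lia.
Qed.

End CellProperties.

Lemma mem_words xs l w : (w \in words xs l) = (size w == l) && all (mem xs) w.
Proof.
elim: l w => [|l IHl] [|x w] //=; rewrite ?in_cons ?in_nil //.
  by apply/allpairsP => -[[? ?] [_ _ /=]].
apply/allpairsP/idP => [[[y v] [yxs vw [-> ->]]]|/and3P[sw xxs wxs]].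
  by move: vw; rewrite IHl eqSS yxs => /andP[-> ->].
by exists (x, w); rewrite IHl -eqSS sw wxs.
Qed.

Lemma uniq_words xs l : uniq xs -> uniq (words xs l).
Proof.
move=> uxs; elim: l => [|l IHl] //=.
by apply: allpairs_uniq => // -[a b] [c d] _ _ /= [-> ->].
Qed.

Lemma mem_all_pairs r s p :
  (p \in all_pairs r s) = (1 <= p.1 <= r) && (1 <= p.2 <= s).
Proof.
case: p => i j; apply/allpairsP/idP => [[[a b] [ha hb [-> ->]]]|bd].
  by move: ha hb; rewrite /= !mem_iota; lia.
by exists (i, j); rewrite /= !mem_iota; move: bd => /= bd; split => //; lia.
Qed.

Lemma uniq_all_pairs r s : uniq (all_pairs r s).
Proof. by apply: allpairs_uniq; rewrite ?iota_uniq // => -[a b] [c d] _ _ /= [-> ->]. Qed.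

Lemma uniq_flatten_words xs m n :
  uniq xs -> uniq (flatten [seq words xs l | l <- iota m n]).
Proof.
move=> uxs; elim: n m => [|n IHn] m //=.
rewrite cat_uniq uniq_words // IHn andbT.
apply/hasPn => w /flattenP[_ /mapP[l lmn ->]]; move: lmn; rewrite mem_iota mem_words.
by move=> le_ml /andP[/eqP sw _]; rewrite mem_words; apply/negP => /andP[/eqP]; lia.
Qed.

Lemma uniq_cells r s : uniq (cells r s).
Proof. by rewrite filter_uniq // uniq_flatten_words // uniq_all_pairs. Qed.

Lemma mem_cells r s C : (C \in cells r s) = is_cell r s C.
Proof.
rewrite mem_filter; apply/andP/idP => [[]//|cellC]; split => //.
have C_pairs : {subset C <= all_pairs r s}.
  by move=> p /(cell_bounds cellC); rewrite mem_all_pairs.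
apply/flattenP; exists (words (all_pairs r s) (size C)).
  apply/mapP; exists (size C) => //; rewrite mem_iota add0n ltnS.
  have := size_allpairs pair (iota 1 r) (iota 1 s); rewrite !size_iota => <-.
  by apply: uniq_leq_size C_pairs; case/and4P: cellC.
by rewrite mem_words eqxx; apply/allP.
Qed.

Definition rows_le r (C : seq (nat * nat)) := all (fun p => p.1 <= r) C.
Definition cols_le s (C : seq (nat * nat)) := all (fun p => p.2 <= s) C.

Lemma is_cell_restrict r s r' s' (P : pred (nat * nat)) C :
  (forall i j, (1 <= i <= r') && (1 <= j <= s') =
               [&& 1 <= i <= r, 1 <= j <= s & P (i, j)]) ->
  is_cell r' s' C = is_cell r s C && all P C.
Proof.
move=> box_eq; rewrite /is_cell (_ : all _ C =
  all (fun p => (1 <= p.1 <= r) && (1 <= p.2 <= s)) C && all P C); last first.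
  by rewrite -all_predI; apply: eq_all => -[i j] /=; rewrite box_eq andbA.
by case: (all P C); rewrite ?andbT ?andbF.
Qed.

Lemma is_cell_rows r s C : is_cell r s.+1 C = is_cell r.+1 s.+1 C && rows_le r C.
Proof. by apply: is_cell_restrict => i j /=; lia. Qed.

Lemma is_cell_cols r s C : is_cell r.+1 s C = is_cell r.+1 s.+1 C && cols_le s C.
Proof. by apply: is_cell_restrict => i j /=; lia. Qed.

Lemma is_cell_rows_cols r s C :
  is_cell r s C = is_cell r.+1 s.+1 C && (rows_le r C && cols_le s C).
Proof. by rewrite -all_predI; apply: is_cell_restrict => i j /=; lia. Qed.

Section Corner.

Variables r s : nat.
Notation corner := (r.+1, s.+1).

Lemma mem_corner_cell C : is_cell r.+1 s.+1 C ->
  (corner \in C) = ~~ (rows_le r C || cols_le s C).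
Proof.
move=> cellC; rewrite negb_or; apply/idP/andP.
  by move=> cC; split; apply/negP => /allP/(_ _ cC); rewrite ltnn.
case=> /allPn[[i j] ijC /= lt_ri] /allPn[[k l] klC /= lt_sl].
move: (cell_bounds cellC ijC) (cell_bounds cellC klC) => /= ? ?.
case/orP: (cell_le_pair_total cellC ijC klC) => /andP[/= ? ?].
  by have -> : corner = (k, l) by congr pair; lia.
by have -> : corner = (i, j) by congr pair; lia.
Qed.

Lemma is_cell_rcons_corner c : is_cell r.+1 s.+1 c ->
  (is_cell r.+1 s.+1 (rcons c corner) = rows_le r c || cols_le s c).
Proof.
move=> cellc; move: (cellc); rewrite {1}/is_cell => /and4P[uc bdc s1 s2].
rewrite /is_cell rcons_uniq all_rcons (sorted_rcons le_fst_trans).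
rewrite (sorted_rcons le_snd_trans).
rewrite uc bdc s1 s2 mem_corner_cell // negbK /= !leqnn !andbT.
have [-> ->] : all (fun p : nat * nat => p.1 <= r.+1) c /\
               all (fun p : nat * nat => p.2 <= s.+1) c.
  by split; apply/allP => -[i j] /(cell_bounds cellc) /=; lia.
by rewrite !andbT.
Qed.

Lemma cell_corner_rcons C : is_cell r.+1 s.+1 C -> corner \in C ->
  exists2 c, C = rcons c corner & is_cell r.+1 s.+1 c.
Proof.
case/lastP: C => [//|c y] cellC cC.
have yC : y \in rcons c y by rewrite mem_rcons mem_head.
have := cell_bounds cellC yC.
move: cellC; rewrite /is_cell rcons_uniq all_rcons.
rewrite (sorted_rcons le_fst_trans) (sorted_rcons le_snd_trans).
case/and4P=> /andP[_ uc] /andP[_ bdc] /andP[s1 le1] /andP[s2 le2] bdy.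
suff -> : y = corner by exists c; rewrite // /is_cell uc bdc s1 s2.
move: cC; rewrite mem_rcons in_cons => /orP[/eqP -> //|cc].
have := allP le1 _ cc; have := allP le2 _ cc.
by case: y bdy {le1 le2 yC} => i j /= ? ? ?; congr pair; lia.
Qed.

End Corner.

Local Open Scope ring_scope.

Lemma big_orb_incl_excl (V : zmodType) (I : Type) (xs : seq I) (a b : pred I)
    (F : I -> V) :
  \sum_(i <- xs | a i || b i) F i =
  \sum_(i <- xs | a i) F i + \sum_(i <- xs | b i) F i
  - \sum_(i <- xs | a i && b i) F i.
Proof.
rewrite (bigID a) [\sum_(i <- xs | b i) _](bigID a) /=.
have eq_sum (P1 P2 : pred I) :
    P1 =1 P2 -> \sum_(i <- xs | P1 i) F i = \sum_(i <- xs | P2 i) F i.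
  exact: eq_bigl.
rewrite (eq_sum (fun i => (a i || b i) && a i) a) => [|i]; last first.
  by case: (a i); rewrite ?andbF.
rewrite (eq_sum (fun i => (a i || b i) && ~~ a i) (fun i => b i && ~~ a i)) => [|i].
  rewrite (eq_sum (fun i => b i && a i) (fun i => a i && b i)) => [|i]; last exact: andbC.
  by rewrite addrCA [RHS]addrC addKr.
by case: (a i); rewrite ?andbF ?andbT.
Qed.

Section CellSum.

Variables (R : comPzRingType) (q : R).

Definition cell_sum r s := \sum_(C <- cells r s) (q - 1) ^+ (r + s - size C - 1).

Lemma big_cells_restrict r s r' s' (P : pred (seq (nat * nat)))
    (F : seq (nat * nat) -> R) :
  (forall C, is_cell r' s' C = is_cell r s C && P C) ->
  \sum_(C <- cells r s | P C) F C = \sum_(C <- cells r' s') F C.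
Proof.
move=> cell_eq; rewrite -big_filter; apply/perm_big/uniq_perm.
- by rewrite filter_uniq // uniq_cells.
- exact: uniq_cells.
by move=> C; rewrite mem_filter !mem_cells cell_eq andbC.
Qed.

Lemma big_cells_corner r s (F : seq (nat * nat) -> R) :
  \sum_(C <- cells r.+1 s.+1 | ~~ (rows_le r C || cols_le s C)) F C =
  \sum_(c <- cells r.+1 s.+1 | rows_le r c || cols_le s c) F (rcons c (r.+1, s.+1)).
Proof.
rewrite -big_filter -[RHS]big_filter -(big_map (rcons^~ (r.+1, s.+1)) xpredT F).
apply/perm_big/uniq_perm.
- by rewrite filter_uniq // uniq_cells.
- by rewrite (map_inj_uniq (rcons_injl _)) filter_uniq // uniq_cells.
move=> C; rewrite mem_filter mem_cells; apply/idP/mapP => [/andP[cC cellC]|[c]].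
  have [|c eqC cellc] := cell_corner_rcons cellC; first by rewrite mem_corner_cell.
  exists c => //; rewrite mem_filter mem_cells cellc andbT.
  by rewrite -(is_cell_rcons_corner cellc) -eqC.
rewrite mem_filter mem_cells => /andP[rc cellc] ->.
by rewrite -mem_corner_cell is_cell_rcons_corner // mem_rcons mem_head.
Qed.

Lemma cell_sum_rec r s : (0 < r + s)%N ->
  cell_sum r.+1 s.+1 =
  q * cell_sum r s.+1 + q * cell_sum r.+1 s - q * (q - 1) * cell_sum r s.
Proof.
move=> rs_gt0; rewrite /cell_sum (bigID (fun C => rows_le r C || cols_le s C)) /=.
rewrite big_cells_corner -big_split /= big_seq_cond.
rewrite (eq_bigr (fun C => q * (q - 1) ^+ (r + s - size C))) => [|C /andP[]]; last first.
  rewrite mem_cells => cellC rc; rewrite size_rcons.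
  have : (size C <= r + s)%N.
    case/orP: rc => [rC|cC].
      have := @size_cell r s.+1 C.
      by rewrite is_cell_rows cellC rC addnS subn1; apply.
    have := @size_cell r.+1 s C.
    by rewrite is_cell_cols cellC cC addSn subn1; apply.
  move=> le_C; have -> : (r.+1 + s.+1 - size C - 1 = (r + s - size C).+1)%N by lia.
  have -> : (r.+1 + s.+1 - (size C).+1 - 1 = r + s - size C)%N by lia.
  by rewrite exprS; ring.
rewrite -big_seq_cond big_orb_incl_excl.
rewrite (big_cells_restrict _ (is_cell_rows r s)) (big_cells_restrict _ (is_cell_cols r s)).
rewrite (big_cells_restrict _ (is_cell_rows_cols r s)) -mulrA !big_distrr /=.
congr (_ + _ - _).
- by apply: eq_bigr => C _; rewrite addnS subnAC subn1.
- by apply: eq_bigr => C _; rewrite addSn subnAC subn1.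
rewrite !big_seq; apply: eq_bigr => C; rewrite mem_cells => /size_cell le_C.
by rewrite -exprS subn1 prednK // subn_gt0; lia.
Qed.

Lemma cells_mul0 r s : (r * s = 0)%N -> cells r s = [:: [::]].
Proof. by rewrite /cells => ->. Qed.

Lemma cell_sum0s s : cell_sum 0 s = (q - 1) ^+ (s - 1).
Proof. by rewrite /cell_sum cells_mul0 // big_seq1 add0n subn0. Qed.

Lemma cell_sumr0 r : cell_sum r 0 = (q - 1) ^+ (r - 1).
Proof. by rewrite /cell_sum cells_mul0 ?muln0 // big_seq1 addn0 subn0. Qed.

Lemma cell_sum11 : cell_sum 1 1 = q.
Proof.
rewrite /cell_sum (_ : cells 1 1 = [:: [::]; [:: (1, 1)%N]]); last by vm_compute.
by rewrite !big_cons big_nil addr0 expr1 expr0 subrK.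
Qed.

Lemma cell_sum1s s : cell_sum 1 s.+1 = q ^+ s.+1.
Proof.
elim: s => [|s IHs]; first by rewrite cell_sum11.
by rewrite cell_sum_rec // IHs !cell_sum0s !subn1 /= !exprS; ring.
Qed.

Lemma cell_sumr1 r : cell_sum r.+1 1 = q ^+ r.+1.
Proof.
elim: r => [|r IHr]; first by rewrite cell_sum11.
by rewrite cell_sum_rec ?addn0 // IHr !cell_sumr0 !subn1 /= !exprS; ring.
Qed.

Definition binom_term a b m := ('C(a, m) * 'C(b, m))%:R * q ^+ (a + b + 1 - m).
Definition binom_sum n a b := \sum_(m < n) binom_term a b m.

Lemma binom_sum_widen n a b : (minn a b < n)%N ->
  binom_sum n a b = binom_sum (minn a b).+1 a b.
Proof.
elim: n => [//|n IHn] lt_min_n; case: (ltnP (minn a b) n) => [lt_min|]; last first.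
  by move=> le_n_min; have -> : n = minn a b by lia.
rewrite /binom_sum big_ord_recr -/(binom_sum n a b) IHn // /binom_term /=.
have [lt_an|lt_bn] : (a < n \/ b < n)%N by lia.
  by rewrite bin_small // mul0n mul0r addr0.
by rewrite (bin_small lt_bn) muln0 mul0r addr0.
Qed.

Lemma binom_term_rec0 a b :
  binom_term a.+1 b.+1 0 =
  q * binom_term a b.+1 0 + q * binom_term a.+1 b 0 - q ^+ 2 * binom_term a b 0.
Proof.
rewrite /binom_term !bin0 !subn0.
have -> : (a.+1 + b.+1 + 1 = (a + b + 1).+2)%N by lia.
have -> : (a + b.+1 + 1 = (a + b + 1).+1)%N by lia.
have -> : (a.+1 + b + 1 = (a + b + 1).+1)%N by lia.
by rewrite !exprS; ring.
Qed.

Lemma binom_term_recS a b m : binom_term a.+1 b.+1 m.+1 =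
  q * binom_term a b.+1 m.+1 + q * binom_term a.+1 b m.+1 + q * binom_term a b m
  - q ^+ 2 * binom_term a b m.+1.
Proof.
rewrite /binom_term; case: (leqP m.+1 (a + b + 1)) => [le_m|lt_m]; last first.
  by rewrite !(@bin_small a) ?(@bin_small a.+1) ?mul0n ?mul0r ?mulr0; try lia; ring.
set e := (a + b + 1 - m.+1)%N.
have -> : (a.+1 + b.+1 + 1 - m.+1 = e.+2)%N by rewrite /e; lia.
have -> : (a + b.+1 + 1 - m.+1 = e.+1)%N by rewrite /e; lia.
have -> : (a.+1 + b + 1 - m.+1 = e.+1)%N by rewrite /e; lia.
have -> : (a + b + 1 - m = e.+1)%N by rewrite /e; lia.
by rewrite !binS !natrM !natrD !exprS; ring.
Qed.

Lemma binom_sum_rec n a b : (a + b + 3 <= n)%N ->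
  binom_sum n a.+1 b.+1 =
  q * binom_sum n a b.+1 + q * binom_sum n a.+1 b - q * (q - 1) * binom_sum n a b.
Proof.
case: n => [|n] le_n; first lia.
have last0 : binom_term a b n = 0 by rewrite /binom_term bin_small ?mul0n ?mul0r //; lia.
have split_ab : q * (q - 1) * binom_sum n.+1 a b =
    q ^+ 2 * (binom_term a b 0 + \sum_(i < n) binom_term a b (lift ord0 i))
    - q * \sum_(i < n) binom_term a b i.
  have -> : \sum_(i < n) binom_term a b i = binom_sum n.+1 a b.
    by rewrite /binom_sum big_ord_recr /= last0 addr0.
  by rewrite /binom_sum big_ord_recl; ring.
rewrite split_ab /binom_sum !big_ord_recl.
under eq_bigr do rewrite binom_term_recS.
rewrite binom_term_rec0 !sumrB !big_split /= -!big_distrr /=; ring.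
Qed.

Lemma cell_sum_binom a b : cell_sum a.+1 b.+1 = binom_sum (minn a b).+1 a b.
Proof.
elim: a b => [|a IHa] b.
  by rewrite cell_sum1s /binom_sum min0n big_ord1 /binom_term !bin0 mul1r add0n addn1.
elim: b => [|b IHb].
  by rewrite cell_sumr1 /binom_sum minn0 big_ord1 /binom_term !bin0 mul1r addn0 addn1.
have widen c d : (c <= a.+1)%N -> (d <= b.+1)%N ->
    binom_sum (minn c d).+1 c d = binom_sum (a + b + 3) c d.
  by move=> le_c le_d; rewrite binom_sum_widen //; lia.
by rewrite cell_sum_rec // IHa IHb IHa !widen // binom_sum_rec.
Qed.

End CellSum.

Theorem mainTheorem15 (r s : nat) (hr : (1 <= r)%N) (hs : (1 <= s)%N) :
  \sum_(C <- cells r s) ('X - 1 : {poly int}) ^+ (r + s - size C - 1)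
  = \sum_(m < (minn (r - 1) (s - 1)).+1)
      ('C(r - 1, m) * 'C(s - 1, m))%:R * 'X ^+ (r + s - m - 1).
Proof.
case: r hr => // a _; case: s hs => // b _.
rewrite !subn1 !succnK; apply: etrans (cell_sum_binom 'X a b) _.
by apply: eq_bigr => m _; rewrite /binom_term; congr (_ * _ ^+ _); lia.
Qed.
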